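(* Let $e:\mathbb{R}^n\to\mathbb{R}^n$ and $f:\mathbb{R}^n\times\mathbb{R}^m\to\mathbb{R}^n$ be continuously differentiable, consider the implicit model $e(x_{t+1})=f(x_t,u_t)$, and let $\alpha\in(0,1)$. Suppose there exists $\epsilon>0$ with $E(x)+E(x)^\top\succ\epsilon I$ for all $x$, and that for all $(x,u)$: $$F(x,u)\ge 0,\quad K(x,u)\ge 0,\quad E(x)\in\mathbb{M}^n,\quad \mathbf{1}^\top\big(\alpha E(x)-F(x,u)\big)\ge 0 .$$ Then the model is well-posed, monotone, and contracting with rate $\alpha$. If in addition $e(0)=f(0,0)$, the model is also positive.
   Context: Consider discrete-time implicit models $e(x_{t+1})=f(x_t,u_t)$, $t=0,1,2,\dots$, with state $x_t\in\mathbb{R}^n$ and input $u_t\in\mathbb{R}^m$, where $e$ and $f$ are continuously differentiable. Write $E=\partial e/\partial x$, $F=\partial f/\partial x$, $K=\partial f/\partial u$. The model is well-posed if for every $(x_t,u_t)$ there is a unique $x_{t+1}$ satisfying the model equation. A well-posed system is contracting with rate $\alpha\in(0,1)$ if there is $p\in[1,\infty]$ such that for any two initial conditions $x^a_0,x^b_0$ and any common input sequence there exists a continuous function $b_p(x^a_0,x^b_0)>0$ with $|x^a_t-x^b_t|_p<\alpha^t b_p(x^a_0,x^b_0)$ for all $t$. It is monotone if $x^a_0\ge x^b_0$ and $u^a_t\ge u^b_t$ for all $t$ imply $x^a_t\ge x^b_t$ for all $t$. It is positive if $x_0\ge0$ and $u_t\ge 0$ for all $t$ imply $x_t\ge0$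 for all $t$. Inequalities between vectors/matrices are elementwise; $\mathbf{1}$ is the all-ones column vector; $M\succ0$ means positive definite. $\mathbb{M}^n$ is the set of $n\times n$ nonsingular M-matrices: real matrices with all off-diagonal entries $\le0$ and all eigenvalues having positive real part. *)

From HB Require Import structures.
From mathcomp Require Import all_boot all_order all_algebra.
From mathcomp Require Import all_classical all_reals all_analysis.
From mathcomp Require Import complex.
Set Implicit Arguments. Unset Strict Implicit. Unset Printing Implicit Defensive.
Import Order.TTheory GRing.Theory Num.Theory.
Import numFieldNormedType.Exports.
Local Open Scope ring_scope.

Section Defs.
Variable R : realType.

(* Standard (column-convention) Jacobian: Jac g x i j = d g_i / d x_j.
   MathComp-Analysis' [jacobian] uses the row-vector convention
   (jacobian g x i j = d g_j / d x_i), hence the transpose. *)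
Definition Jac n k (g : 'rV[R]_n -> 'rV[R]_k) (x : 'rV[R]_n) : 'M[R]_(k, n) :=
  (jacobian g x)^T.

Definition C1map n k (g : 'rV[R]_n -> 'rV[R]_k) : Prop :=
  (forall x, differentiable g x) /\ continuous (fun x => jacobian g x).

(* f : R^n x R^m -> R^n is given curried; joint C^1 regularity is required
   of the uncurried map on R^(n+m). *)
Definition uncurry_f n m (f : 'rV[R]_n -> 'rV[R]_m -> 'rV[R]_n)
  : 'rV[R]_(n + m) -> 'rV[R]_n := fun z => f (lsubmx z) (rsubmx z).

Definition Emat n (e : 'rV[R]_n -> 'rV[R]_n) x : 'M[R]_n := Jac e x.
Definition Fmat n m (f : 'rV[R]_n -> 'rV[R]_m -> 'rV[R]_n) x u : 'M[R]_n :=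
  Jac (fun y => f y u) x.
Definition Kmat n m (f : 'rV[R]_n -> 'rV[R]_m -> 'rV[R]_n) x u : 'M[R]_(n, m) :=
  Jac (fun v => f x v) u.

Definition mx_le p q (A B : 'M[R]_(p, q)) : Prop := forall i j, A i j <= B i j.

(* M positive definite (symmetric part is not assumed; quadratic form) *)
Definition posdef_mx n (M : 'M[R]_n) : Prop :=
  forall v : 'rV[R]_n, v != 0 -> 0 < (v *m M *m v^T) 0 0.

Definition is_Mmatrix n (A : 'M[R]_n) : Prop :=
  (forall i j, i != j -> A i j <= 0) /\
  (forall lam : complex R,
     eigenvalue (map_mx (fun a : R => complex.Complex a 0) A) lam ->
     0 < complex.Re lam).

Definition lp_norm n (p : \bar R) (v : 'rV[R]_n) : R :=
  match p with
  | EFin r => (\sum_(i < n) `|v 0 i| `^ r) `^ r^-1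
  | _ => \big[Num.max/0]_(i < n) `|v 0 i|
  end.

Definition is_traj n m (e : 'rV[R]_n -> 'rV[R]_n)
  (f : 'rV[R]_n -> 'rV[R]_m -> 'rV[R]_n)
  (u : nat -> 'rV[R]_m) (x : nat -> 'rV[R]_n) : Prop :=
  forall t, e (x t.+1) = f (x t) (u t).

Definition well_posed_sys n m (e : 'rV[R]_n -> 'rV[R]_n)
  (f : 'rV[R]_n -> 'rV[R]_m -> 'rV[R]_n) : Prop :=
  forall x u, exists! y, e y = f x u.

Definition contracting_sys n m (e : 'rV[R]_n -> 'rV[R]_n)
  (f : 'rV[R]_n -> 'rV[R]_m -> 'rV[R]_n) (alpha : R) : Prop :=
  well_posed_sys e f /\
  exists p : \bar R, (1%:E <= p)%E /\
  exists b : 'rV[R]_n -> 'rV[R]_n -> R,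
    continuous (fun z : 'rV[R]_n * 'rV[R]_n => b z.1 z.2) /\
    (forall xa xb, 0 < b xa xb) /\
    forall (u : nat -> 'rV[R]_m) (xa xb : nat -> 'rV[R]_n),
      is_traj e f u xa -> is_traj e f u xb ->
      forall t, lp_norm p (xa t - xb t) < alpha ^+ t * b (xa 0%N) (xb 0%N).

Definition monotone_sys n m (e : 'rV[R]_n -> 'rV[R]_n)
  (f : 'rV[R]_n -> 'rV[R]_m -> 'rV[R]_n) : Prop :=
  forall (ua ub : nat -> 'rV[R]_m) (xa xb : nat -> 'rV[R]_n),
    is_traj e f ua xa -> is_traj e f ub xb ->
    mx_le (xb 0%N) (xa 0%N) -> (forall t, mx_le (ub t) (ua t)) ->
    forall t, mx_le (xb t) (xa t).

Definition positive_sys n m (e : 'rV[R]_n -> 'rV[R]_n)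
  (f : 'rV[R]_n -> 'rV[R]_m -> 'rV[R]_n) : Prop :=
  forall (u : nat -> 'rV[R]_m) (x : nat -> 'rV[R]_n),
    is_traj e f u x -> mx_le 0 (x 0%N) -> (forall t, mx_le 0 (u t)) ->
    forall t, mx_le 0 (x t).

End Defs.

(* The hypothesis E + E^T > eps I makes e strongly monotone,
   <a - b, e a - e b> >= (eps/2) |a - b|^2, by the mean value inequality along
   segments.  Hence e is injective, and it is onto: |e y - c|^2 is coercive, so
   it attains a minimum, where its derivative 2 <e y - c, E (e y - c)> vanishes,
   which forces e y = c.  Monotonicity: F, K >= 0 make f monotone, and since E is
   a Z-matrix (only this half of the M-matrix hypothesis is needed) e cannot
   increase a coordinate while the others grow, which together with strong
   monotonicity gives e z <= e y -> z <= y.  Contraction: differentiating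
   alpha <sg(a - b), e> - <sg(f a - f b), f> along [b, a], the Z-sign pattern of E,
   F >= 0 and the column condition 1^T F <= alpha 1^T E give
   |f a - f b|_1 <= alpha |e a - e b|_1, while strong monotonicity bounds
   |a - b|_oo by |e a - e b|_1 / (eps/2).  Positivity is monotonicity against the
   zero trajectory. *)

From HB Require Import structures.
From mathcomp Require Import all_boot all_order all_algebra.
From mathcomp Require Import all_classical all_reals all_analysis.
From mathcomp Require Import complex.
From mathcomp Require Import lra.
Import Order.TTheory GRing.Theory Num.Theory.
Import numFieldNormedType.Exports.
Local Open Scope ring_scope.
Set Implicit Arguments. Unset Strict Implicit.

Section RowDot.
Variable R : realFieldType.

Definition dotr k (u v : 'rV[R]_k) : R := (u *m v^T) 0 0.

Definition l1norm k (v : 'rV[R]_k) : R := \sum_i `|v 0 i|.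

Lemma dotrE k (u v : 'rV[R]_k) : dotr u v = \sum_i u 0 i * v 0 i.
Proof. by rewrite /dotr !mxE; apply: eq_bigr => i _; rewrite mxE. Qed.

Lemma mul_rV_trmxE k l (d : 'rV[R]_k) (A : 'M[R]_(l, k)) i :
  (d *m A^T) 0 i = \sum_j A i j * d 0 j.
Proof. by rewrite mxE; apply: eq_bigr => j _; rewrite mxE mulrC. Qed.

Lemma dotrC k (u v : 'rV[R]_k) : dotr u v = dotr v u.
Proof. by rewrite !dotrE; apply: eq_bigr => i _; rewrite mulrC. Qed.

Lemma dotr0l k (v : 'rV[R]_k) : dotr 0 v = 0.
Proof. by rewrite /dotr mul0mx mxE. Qed.

Lemma dotr0r k (u : 'rV[R]_k) : dotr u 0 = 0.
Proof. by rewrite dotrC dotr0l. Qed.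

Lemma dotrBr k (u v w : 'rV[R]_k) : dotr u (v - w) = dotr u v - dotr u w.
Proof. by rewrite !dotrE -sumrB; apply: eq_bigr => i _; rewrite !mxE mulrBr. Qed.

Lemma dotrZr k a (u v : 'rV[R]_k) : dotr u (a *: v) = a * dotr u v.
Proof. by rewrite !dotrE mulr_sumr; apply: eq_bigr => i _; rewrite !mxE mulrCA. Qed.

Lemma dotrDl k (u v w : 'rV[R]_k) : dotr (u + v) w = dotr u w + dotr v w.
Proof. by rewrite /dotr mulmxDl mxE. Qed.

Lemma dotrBl k (u v w : 'rV[R]_k) : dotr (u - v) w = dotr u w - dotr v w.
Proof. by rewrite dotrC dotrBr dotrC [dotr w v]dotrC. Qed.

Lemma dotrZl k a (u v : 'rV[R]_k) : dotr (a *: u) v = a * dotr u v.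
Proof. by rewrite dotrC dotrZr dotrC. Qed.

Lemma dotr_mulmxl k (u w : 'rV[R]_k) (A : 'M[R]_k) : dotr (u *m A) w = dotr u (w *m A^T).
Proof. by rewrite /dotr trmx_mul trmxK mulmxA. Qed.

Lemma dotr_ge0 k (u v : 'rV[R]_k) :
  (forall i, 0 <= u 0 i) -> (forall i, 0 <= v 0 i) -> 0 <= dotr u v.
Proof. by move=> u0 v0; rewrite dotrE sumr_ge0 // => i _; rewrite mulr_ge0. Qed.

Lemma dotr_self_ge0 k (v : 'rV[R]_k) : 0 <= dotr v v.
Proof. by rewrite dotrE sumr_ge0 // => i _; rewrite -expr2 sqr_ge0. Qed.

Lemma dotr_self_ge_sqr k (v : 'rV[R]_k) i : v 0 i ^+ 2 <= dotr v v.
Proof.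
rewrite dotrE (bigD1 i) //= -expr2 lerDl.
by apply: sumr_ge0 => j _; rewrite -expr2 sqr_ge0.
Qed.

Lemma dotr_self_eq0 k (v : 'rV[R]_k) : dotr v v = 0 -> v = 0.
Proof.
move=> v0; apply/rowP => i; rewrite mxE; apply/eqP; rewrite -sqrf_eq0 eq_le sqr_ge0.
by rewrite -v0 dotr_self_ge_sqr.
Qed.

Lemma dotr_le_l1norm k (c v : 'rV[R]_k) (r : R) :
  (forall i, `|c 0 i| <= r) -> dotr c v <= r * l1norm v.
Proof.
move=> cr; rewrite dotrE mulr_sumr; apply: ler_sum => i _.
by rewrite (le_trans (ler_norm _)) // normrM ler_wpM2r.
Qed.

Lemma l1norm_ge0 k (v : 'rV[R]_k) : 0 <= l1norm v.
Proof. exact: sumr_ge0. Qed.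

Lemma l1normB k (u v : 'rV[R]_k) : l1norm (u - v) <= l1norm u + l1norm v.
Proof.
by rewrite /l1norm -big_split; apply: ler_sum => i _; rewrite !mxE ler_normB.
Qed.

Lemma l1norm_le_dotr_self k (v : 'rV[R]_k) : l1norm v <= k%:R + dotr v v.
Proof.
rewrite /l1norm dotrE -[k in k%:R]card_ord -sumr_const -big_split.
apply: ler_sum => i _; rewrite -expr2 -real_normK ?num_real //.
have [v1|v1] := lerP `|v 0 i| 1; first by rewrite (le_trans v1) // lerDl sqr_ge0.
by rewrite ler_wpDl // expr2 ler_peMl // ltW.
Qed.

Lemma dotr_sg_l1norm k (v : 'rV[R]_k) : dotr (map_mx Num.sg v) v = l1norm v.
Proof. by rewrite dotrE; apply: eq_bigr => i _; rewrite mxE -normrEsg. Qed.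

Lemma normr_sg_le1 (x : R) : `|Num.sg x| <= 1.
Proof. by rewrite normr_sg; case: (x != 0). Qed.

(* [d *m A^T] is the action [d |-> A d] on row vectors and [const_mx 1 *m A]
   the row of column sums of [A]. *)
Lemma dotr_nonneg_mx_le k (A : 'M[R]_k) (c d : 'rV[R]_k) :
  (forall i j, 0 <= A i j) -> (forall i, `|c 0 i| <= 1) ->
  dotr c (d *m A^T) <= dotr (map_mx Num.norm d) (const_mx 1 *m A).
Proof.
move=> A0 c1; rewrite !dotrE.
under [X in _ <= X]eq_bigr do rewrite !mxE mulr_sumr.
rewrite exchange_big /=; apply: ler_sum => i _; rewrite mxE mulr_sumr.
apply: ler_sum => j _; rewrite !mxE mul1r mulrA ler_wpM2r //.
by apply: (le_trans (ler_norm _)); rewrite normrM; apply: ler_piMl.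
Qed.

Lemma dotr_Zmx_ge k (A : 'M[R]_k) (d : 'rV[R]_k) :
  (forall i j, i != j -> A i j <= 0) ->
  dotr (map_mx Num.norm d) (const_mx 1 *m A) <= dotr (map_mx Num.sg d) (d *m A^T).
Proof.
move=> Aoff; rewrite !dotrE.
under eq_bigr do rewrite !mxE mulr_sumr.
rewrite exchange_big /=; apply: ler_sum => i _; rewrite !mxE mulr_sumr.
apply: ler_sum => j _; rewrite !mxE mul1r mulrA.
have [->|ij] := eqVneq i j; first by rewrite -normrEsg.
apply: ler_wnM2r; first exact: Aoff.
apply: (le_trans (ler_norm _)); rewrite normrM.
by apply: ler_piMl => //; exact: normr_sg_le1.
Qed.

End RowDot.

Section DirectionalDerivatives.
Variables (R : realType) (V : normedModType R).

Lemma is_derive_line (W : normedModType R) (h : V -> W) (b d : V) (s : R) (dh : W) :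
  is_derive (b + s *: d) d h dh -> is_derive s 1 (fun t => h (b + t *: d)) dh.
Proof.
move=> [hd <-].
have quot : (fun r : R => r^-1 *: (h (b + (r *: 1 + s) *: d) - h (b + s *: d)))
    = (fun r => r^-1 *: (h (r *: d + (b + s *: d)) - h (b + s *: d))).
  by apply/funext => r; rewrite [r *: 1]mulr1 scalerDl addrCA.
by apply: DeriveDef; rewrite /derivable /derive quot.
Qed.

Lemma le_along_segment (h : V -> R) (b d : V) (D : R -> R) (K : R) :
  (forall s, is_derive (b + s *: d) d h (D s)) ->
  (forall s, 0 < s < 1 -> K <= D s) -> h b + K <= h (b + d).
Proof.
move=> hD KD.
pose phi := (fun t => h (b + t *: d)) - K \*: id.
have dphi (t : R) : is_derive t 1 phi (D t - K *: 1).
  exact: is_deriveB (is_derive_line (hD t)) (is_deriveZ K (is_derive_id t 1)).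
have mono : phi 0 <= phi 1.
  apply: (@ger0_derive1_ndecr R phi 0 1) => //.
  - move=> t; rewrite in_itv /= => /KD.
    by rewrite derive1E (@derive_val _ _ _ _ _ _ _ (dphi t)) [K *: 1]mulr1 subr_ge0.
  - apply: continuous_subspaceT => t; apply: differentiable_continuous.
    by apply/derivable1_diffP; case: (dphi t).
have : h (b + 0 *: d) - K *: 0 <= h (b + 1 *: d) - K *: 1 by exact: mono.
by rewrite scale0r addr0 scale1r scaler0 subr0 [K *: 1]mulr1; lra.
Qed.

Lemma derive_eq0_at_min (h : V -> R) (y d : V) :
  (forall t : R, derivable h (y + t *: d) d) -> (forall z, h y <= h z) ->
  'D_d h y = 0.
Proof.
move=> hd ymin.
have dline (t : R) : is_derive t 1 (fun t => h (y + t *: d)) ('D_d h (y + t *: d)).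
  exact/is_derive_line/derivableP.
have crit : is_derive (0 : R) 1 (fun t : R => h (y + t *: d)) 0.
  apply: (@derive1_at_min R _ (-1) 1).
  - by lra.
  - by move=> t _; case: (dline t).
  - by rewrite in_itv /=; apply/andP; split; lra.
  - by move=> t _; rewrite scale0r addr0.
have := @derive_val _ _ _ _ _ _ _ (dline 0).
by rewrite scale0r addr0 (@derive_val _ _ _ _ _ _ _ crit).
Qed.

Lemma is_derive_coord m k (g : V -> 'M[R]_(m, k)) x v dg i j :
  is_derive x v g dg -> is_derive x v (fun y => g y i j) (dg i j).
Proof.
move=> [gd <-]; apply: DeriveDef; first exact: (derivable_mxP g x v).1.
by rewrite derive_mx // mxE.
Qed.

Lemma is_derive_dotr k (g h : V -> 'rV[R]_k) x v dg dh :
  is_derive x v g dg -> is_derive x v h dh ->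
  is_derive x v (fun y => dotr (g y) (h y)) (dotr dg (h x) + dotr (g x) dh).
Proof.
move=> gd hd.
have -> : (fun y => dotr (g y) (h y)) = \sum_i ((fun y => g y 0 i) * (fun y => h y 0 i)).
  by apply/funext => y; rewrite dotrE fct_sumE.
apply: is_derive_eq.
  apply: is_derive_sum => i.
  exact: is_deriveM (is_derive_coord 0 i gd) (is_derive_coord 0 i hd).
rewrite !dotrE -big_split; apply: eq_bigr => i _ /=.
by rewrite addrC [dg 0 i * _]mulrC.
Qed.

End DirectionalDerivatives.

Section RowCalculus.
Variable R : realType.

Lemma is_derive_dotl (V : normedModType R) k (c : 'rV[R]_k) (g : V -> 'rV[R]_k)
    x v dg :
  is_derive x v g dg -> is_derive x v (fun y => dotr c (g y)) (dotr c dg).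
Proof.
move=> gd; apply: is_derive_eq; first exact: is_derive_dotr (is_derive_cst c x v) gd.
by rewrite dotr0l add0r.
Qed.

Lemma is_derive_Jac n k (g : 'rV[R]_n -> 'rV[R]_k) x d :
  differentiable g x -> is_derive x d g (d *m (Jac g x)^T).
Proof.
by move=> gx; rewrite /Jac trmxK -deriveEjacobian //; exact/derivableP/diff_derivable.
Qed.

Lemma differentiable_affine n k (A : 'M[R]_(n, k)) (C : 'rV[R]_k) (x : 'rV[R]_n) :
  differentiable (fun y => y *m A + C) x.
Proof.
have -> : (fun y => y *m A + C) =
    \sum_(j < n) (fun y : 'rV[R]_n => y 0 j *: row j A) + cst C.
  by apply/funext => y /=; rewrite fct_sumE mulmx_sum_row.
apply: differentiableD; last exact: differentiable_cst.
apply: differentiable_sum => j; apply: differentiableZl; exact: differentiable_coord.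
Qed.

Section Partial.
Variables (n m : nat) (f : 'rV[R]_n -> 'rV[R]_m -> 'rV[R]_n).
Hypothesis f_diff : forall z, differentiable (uncurry_f f) z.

Lemma differentiable_partial1 x u : differentiable (f^~ u) x.
Proof.
have -> : f^~ u = uncurry_f f \o (fun y => y *m row_mx 1%:M 0 + row_mx 0 u).
  apply/funext => y; rewrite /uncurry_f /= mul_mx_row mulmx1 mulmx0 add_row_mx.
  by rewrite addr0 add0r row_mxKl row_mxKr.
exact: differentiable_comp (differentiable_affine _ _ _) (f_diff _).
Qed.

Lemma differentiable_partial2 x u : differentiable (f x) u.
Proof.
have -> : f x = uncurry_f f \o (fun v => v *m row_mx 0 1%:M + row_mx x 0).
  apply/funext => v; rewrite /uncurry_f /= mul_mx_row mulmx1 mulmx0 add_row_mx.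
  by rewrite addr0 add0r row_mxKl row_mxKr.
exact: differentiable_comp (differentiable_affine _ _ _) (f_diff _).
Qed.

End Partial.

Lemma continuous_l1norm k : continuous (@l1norm R k).
Proof.
have -> : @l1norm R k = \sum_i (fun v : 'rV[R]_k => `|v 0 i|).
  by apply/funext => v; rewrite fct_sumE.
move=> v; elim/big_ind: _ => [|g1 g2|i _]; first exact: cst_continuous.
  exact: continuousD.
apply: (@continuous_comp _ _ _ (fun w : 'rV[R]_k => w 0 i) (fun r : R => `|r|)).
  exact: coord_continuous.
exact: norm_continuous.
Qed.

Lemma continuous_dotr_self k : continuous (fun v : 'rV[R]_k => dotr v v).
Proof.
have -> : (fun v : 'rV[R]_k => dotr v v)
    = \sum_i ((fun v : 'rV[R]_k => v 0 i) * (fun v => v 0 i)).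
  by apply/funext => v; rewrite dotrE fct_sumE.
move=> v; elim/big_ind: _ => [|g1 g2|i _]; first exact: cst_continuous.
  exact: continuousD.
by apply: continuousM; exact: coord_continuous.
Qed.

Lemma bounded_set_rV k (A : set 'rV[R]_k) (B : R) :
  (forall y, A y -> forall i, `|y 0 i| <= B) -> bounded_set A.
Proof.
move=> AB; exists (Num.max B 0); split; first by rewrite num_real.
move=> M BM y Ay /=; rewrite [leLHS]/Num.Def.normr /= mx_normrE.
apply: bigmax_le => [|[i0 j] _].
  by apply: ltW; rewrite (le_lt_trans _ BM) // le_max lexx orbT.
by rewrite (ord1 i0) (le_trans (AB _ Ay j)) // ltW // (le_lt_trans _ BM) // le_max lexx.
Qed.

End RowCalculus.

Section JacobianSign.
Variables (R : realType) (n : nat).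

Lemma Jac_ge0_homo k (g : 'rV[R]_n -> 'rV[R]_k) :
  (forall x, differentiable g x) -> (forall x, mx_le 0 (Jac g x)) ->
  forall a b, mx_le b a -> mx_le (g b) (g a).
Proof.
move=> g_diff J0 a b ba i0 i; rewrite (ord1 i0).
have := @le_along_segment R _ (fun y => g y 0 i) b (a - b)
  (fun s => ((a - b) *m (Jac g (b + s *: (a - b)))^T) 0 i) 0.
rewrite addr0 subrKC; apply=> [s|s _].
  exact/is_derive_coord/is_derive_Jac.
rewrite mul_rV_trmxE sumr_ge0 // => j _; rewrite mulr_ge0 //.
  by have := J0 (b + s *: (a - b)) i j; rewrite [X in X <= _]mxE.
by rewrite !mxE subr_ge0 ba.
Qed.

Lemma Jac_Zmx_coord_antitone (g : 'rV[R]_n -> 'rV[R]_n) :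
  (forall x, differentiable g x) -> (forall x i j, i != j -> Jac g x i j <= 0) ->
  forall z w i, mx_le z w -> w 0 i = z 0 i -> g w 0 i <= g z 0 i.
Proof.
move=> g_diff JZ z w i zw wz.
have := @le_along_segment R _ (fun y => g y 0 i) w (z - w)
  (fun s => ((z - w) *m (Jac g (w + s *: (z - w)))^T) 0 i) 0.
rewrite addr0 subrKC; apply=> [s|s _].
  exact/is_derive_coord/is_derive_Jac.
have dzw j : (z - w) 0 j = z 0 j - w 0 j by rewrite !mxE.
rewrite mul_rV_trmxE sumr_ge0 // => j _.
have [<-|ij] := eqVneq i j; first by rewrite dzw wz subrr mulr0.
by rewrite mulr_le0 ?JZ // dzw subr_le0 zw.
Qed.

End JacobianSign.

Section CoerciveJacobian.
Variables (R : realType) (n : nat) (g : 'rV[R]_n -> 'rV[R]_n) (eps : R).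
Hypothesis g_diff : forall x, differentiable g x.
Hypothesis eps_gt0 : 0 < eps.
Hypothesis Jac_coercive : forall x v, eps * dotr v v <= dotr v (v *m (Jac g x)^T).

Lemma strongly_monotone a b : eps * dotr (a - b) (a - b) <= dotr (a - b) (g a - g b).
Proof.
have := @le_along_segment R _ (fun y => dotr (a - b) (g y)) b (a - b)
  (fun s => dotr (a - b) ((a - b) *m (Jac g (b + s *: (a - b)))^T))
  (eps * dotr (a - b) (a - b)).
rewrite subrKC (dotrBr (a - b) (g a)) => seg.
suff : dotr (a - b) (g b) + eps * dotr (a - b) (a - b) <= dotr (a - b) (g a) by lra.
apply: seg => [s|s _]; last exact: Jac_coercive.
exact/is_derive_dotl/is_derive_Jac.
Qed.

Lemma coercive_eq0 (v : 'rV[R]_n) : eps * dotr v v <= 0 -> v = 0.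
Proof.
rewrite pmulr_rle0 // => v0; apply: dotr_self_eq0.
by apply/eqP; rewrite eq_le v0 dotr_self_ge0.
Qed.

Lemma coercive_inj : injective g.
Proof.
move=> a b gab; apply/eqP; rewrite -subr_eq0; apply/eqP/coercive_eq0.
by have := strongly_monotone a b; rewrite gab subrr dotr0r.
Qed.

Lemma coord_le_l1norm (a b : 'rV[R]_n) i : `|(a - b) 0 i| <= l1norm (g a - g b) / eps.
Proof.
set d := a - b.
have [k _ dk] :=
  @eq_bigmax _ _ _ 0 i xpredT (fun j => `|d 0 j|) isT (fun j _ => normr_ge0 _).
have dmax j : `|d 0 j| <= `|d 0 k| by rewrite -dk; exact: le_bigmax.
have sq : eps * `|d 0 k| ^+ 2 <= `|d 0 k| * l1norm (g a - g b).
  apply: le_trans (dotr_le_l1norm _ dmax).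
  apply: le_trans (strongly_monotone a b); rewrite ler_pM2l // real_normK ?num_real //.
  exact: dotr_self_ge_sqr.
apply: le_trans (dmax i) _.
have [->|dk0] := eqVneq `|d 0 k| 0; first by rewrite divr_ge0 ?l1norm_ge0 ?ltW.
have dk_gt0 : 0 < `|d 0 k| by rewrite lt_def dk0 normr_ge0.
rewrite ler_pdivlMr // -(ler_pM2l dk_gt0).
by rewrite mulrA -expr2 [_ * eps]mulrC.
Qed.

Lemma sup_norm_le_l1norm (a b : 'rV[R]_n) :
  lp_norm (+oo)%E (a - b) <= l1norm (g a - g b) / eps.
Proof.
apply: bigmax_le => [|i _]; last exact: coord_le_l1norm.
by rewrite divr_ge0 ?l1norm_ge0 ?ltW.
Qed.

Definition sqdist (c y : 'rV[R]_n) : R := dotr (g y - c) (g y - c).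

Lemma is_derive_sqdist c y d :
  is_derive y d (sqdist c) (2 * dotr (g y - c) (d *m (Jac g y)^T)).
Proof.
have gc : is_derive y d (fun z => g z - c) (d *m (Jac g y)^T - 0).
  exact: is_deriveB (is_derive_Jac _ (g_diff y)) (is_derive_cst c y d).
apply: is_derive_eq; first exact: (is_derive_dotr gc gc).
by rewrite subr0 dotrC mulr2n mulrDl mul1r.
Qed.

Lemma continuous_sqdist c : continuous (sqdist c).
Proof.
move=> y.
apply: (@continuous_comp _ _ _ (fun z : 'rV[R]_n => g z - c) (fun v => dotr v v)).
  apply: continuousB; last exact: cst_continuous.
  exact: differentiable_continuous.
exact: continuous_dotr_self.
Qed.

Lemma sqdist_bounded_sublevel c :
  bounded_set [set y | sqdist c y <= sqdist c 0]%classic.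
Proof.
apply: (@bounded_set_rV R n _ ((2 * n%:R + 2 * sqdist c 0) / eps)) => y /= yc i.
have := coord_le_l1norm y 0 i; rewrite subr0 => /le_trans; apply.
rewrite ler_pM2r ?invr_gt0 //.
have -> : g y - g 0 = (g y - c) - (g 0 - c) by rewrite opprB addrA subrK.
apply: le_trans (l1normB _ _) _.
have := l1norm_le_dotr_self (g y - c); have := l1norm_le_dotr_self (g 0 - c).
rewrite -!/(sqdist c _); lra.
Qed.

Lemma sqdist_min c : exists y, forall z, sqdist c y <= sqdist c z.
Proof.
pose A := [set y | sqdist c y <= sqdist c 0]%classic.
have Acl : closed A.
  apply: (@preimage_closed _ _ (sqdist c) [set r | r <= sqdist c 0]%classic).
    by move=> y _; exact: continuous_sqdist.
  exact: closed_le.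
have Acp : compact A := bounded_closed_compact (sqdist_bounded_sublevel c) Acl.
have A0 : (A !=set0)%classic by exists 0; rewrite /A /=.
have [y Ay ymin] := EVT_min_rV A0 Acp (continuous_subspaceT (@continuous_sqdist c)).
exists y => z; have [zA|zA] := boolP (z \in A); first exact: ymin.
apply: le_trans (set_mem Ay) (ltW _); rewrite ltNge.
by apply: contra zA => /mem_set.
Qed.

Lemma coercive_surj c : exists y, g y = c.
Proof.
have [y ymin] := sqdist_min c; exists y; apply/eqP; rewrite -subr_eq0; apply/eqP.
have crit : 'D_(g y - c) (sqdist c) y = 0.
  apply: derive_eq0_at_min ymin => t.
  by case: (is_derive_sqdist c (y + t *: (g y - c)) (g y - c)).
rewrite (@derive_val _ _ _ _ _ _ _ (is_derive_sqdist c y (g y - c))) in crit.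
apply: coercive_eq0; rewrite (le_trans (Jac_coercive y _)) //.
by move/eqP: crit; rewrite mulf_eq0 pnatr_eq0 => /eqP ->.
Qed.

Hypothesis Jac_Zmx : forall x i j, i != j -> Jac g x i j <= 0.

Lemma coercive_Zmx_le_inv y z : mx_le (g z) (g y) -> mx_le z y.
Proof.
move=> gzy.
(* [y + p] is the entrywise maximum of [y] and [z]. *)
pose p : 'rV[R]_n := \row_l Num.max (z 0 l - y 0 l) 0.
have term_le0 i : p 0 i * (g (y + p) - g y) 0 i <= 0.
  have [zy|yz] := lerP (z 0 i - y 0 i) 0; first by rewrite mxE max_r // mul0r.
  have pi : p 0 i = z 0 i - y 0 i by rewrite mxE max_l // ltW.
  rewrite pi; apply: mulr_ge0_le0; first exact: ltW.
  have -> : (g (y + p) - g y) 0 i = g (y + p) 0 i - g y 0 i by rewrite !mxE.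
  rewrite subr_le0 (le_trans _ (gzy 0 i)) //.
  apply: (Jac_Zmx_coord_antitone g_diff Jac_Zmx).
    by move=> j0 j; rewrite (ord1 j0) !mxE -lerBlDl le_max lexx.
  by rewrite [(y + p) 0 i]mxE pi subrKC.
have p0 : p = 0.
  apply: coercive_eq0; have := strongly_monotone (y + p) y.
  rewrite [y + p - y]addrC addKr => /le_trans; apply.
  by rewrite dotrE; apply: sumr_le0 => i _.
move=> i0 i; rewrite (ord1 i0) -subr_le0.
have : p 0 i = 0 by rewrite p0 mxE.
by rewrite mxE => <-; rewrite le_max lexx.
Qed.

End CoerciveJacobian.

Section ImplicitModel.
Variables (R : realType) (n m : nat).
Variables (e : 'rV[R]_n -> 'rV[R]_n) (f : 'rV[R]_n -> 'rV[R]_m -> 'rV[R]_n).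
Variables (alpha eps : R).
Hypothesis e_diff : forall x, differentiable e x.
Hypothesis fx_diff : forall x u, differentiable (f^~ u) x.
Hypothesis fu_diff : forall x u, differentiable (f x) u.
Hypothesis eps_gt0 : 0 < eps.
Hypothesis alpha_gt0 : 0 < alpha.
Hypothesis E_coercive : forall x v, eps * dotr v v <= dotr v (v *m (Emat e x)^T).
Hypothesis E_Zmx : forall x i j, i != j -> Emat e x i j <= 0.
Hypothesis F_ge0 : forall x u, mx_le 0 (Fmat f x u).
Hypothesis K_ge0 : forall x u, mx_le 0 (Kmat f x u).
Hypothesis colsum_ge0 :
  forall x u, mx_le 0 (const_mx 1 *m (alpha *: Emat e x - Fmat f x u) : 'rV[R]_n).

Lemma f_homo x x' u u' : mx_le x' x -> mx_le u' u -> mx_le (f x' u') (f x u).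
Proof.
move=> xx uu i0 i; apply: (@le_trans _ _ (f x u' i0 i)).
  exact: (Jac_ge0_homo (fx_diff^~ u') (F_ge0^~ u')).
exact: (Jac_ge0_homo (fu_diff x) (K_ge0 x)).
Qed.

Lemma colsum_le (x : 'rV[R]_n) u (w : 'rV[R]_n) : (forall i, 0 <= w 0 i) ->
  dotr w (const_mx 1 *m Fmat f x u) <= alpha * dotr w (const_mx 1 *m Emat e x).
Proof.
move=> w0; rewrite -subr_ge0 -dotrZr -dotrBr scalemxAr -mulmxBr.
by apply: dotr_ge0 => // i; have := colsum_ge0 x u 0 i; rewrite [X in X <= _]mxE.
Qed.

Lemma l1norm_contraction a b u :
  l1norm (f a u - f b u) <= alpha * l1norm (e a - e b).
Proof.
(* Pairing with these sign vectors turns both l1-norms into linear functionals. *)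
pose s := map_mx Num.sg (a - b); pose sf := map_mx Num.sg (f a u - f b u).
have := @le_along_segment R _
  (alpha \*: (fun y => dotr s (e y)) - (fun y => dotr sf (f y u))) b (a - b)
  (fun t => alpha *: dotr s ((a - b) *m (Emat e (b + t *: (a - b)))^T)
            - dotr sf ((a - b) *m (Fmat f (b + t *: (a - b)) u)^T)) 0.
rewrite addr0 subrKC /= => seg.
have {seg} : dotr sf (f a u - f b u) <= alpha * dotr s (e a - e b).
  rewrite !dotrBr; suff : alpha * dotr s (e b) - dotr sf (f b u)
      <= alpha * dotr s (e a) - dotr sf (f a u) by lra.
  apply: seg => [t|t _].
    apply: is_deriveB; first apply: is_deriveZ.
      exact/is_derive_dotl/is_derive_Jac.
    exact/is_derive_dotl/is_derive_Jac.
  rewrite subr_ge0; set z := b + t *: (a - b).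
  have abs0 i : 0 <= map_mx Num.norm (a - b) 0 i by rewrite mxE.
  apply: le_trans (dotr_nonneg_mx_le _ _ _) _.
  - by move=> i j; have := F_ge0 z u i j; rewrite [X in X <= _]mxE.
  - by move=> i; rewrite mxE normr_sg_le1.
  apply: le_trans (colsum_le z u abs0) _; apply: ler_wpM2l; first exact: ltW.
  exact: dotr_Zmx_ge (E_Zmx z).
rewrite dotr_sg_l1norm => /le_trans; apply; apply: ler_wpM2l; first exact: ltW.
by rewrite -[X in _ <= X]mul1r; apply: dotr_le_l1norm => i; rewrite mxE normr_sg_le1.
Qed.

Lemma l1norm_traj_le u xa xb : is_traj e f u xa -> is_traj e f u xb ->
  forall t,
  l1norm (e (xa t) - e (xb t)) <= alpha ^+ t * l1norm (e (xa 0%N) - e (xb 0%N)).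
Proof.
move=> ha hb; elim=> [|t IH]; first by rewrite expr0 mul1r.
rewrite ha hb (le_trans (l1norm_contraction _ _ _)) // exprS -mulrA.
by rewrite ler_wpM2l // ltW.
Qed.

Lemma model_well_posed : well_posed_sys e f.
Proof.
move=> x u; have [y ey] := coercive_surj e_diff eps_gt0 E_coercive (f x u).
exists y; split => // y' ey'.
by apply: (coercive_inj e_diff eps_gt0 E_coercive); rewrite ey ey'.
Qed.

Lemma model_monotone : monotone_sys e f.
Proof.
move=> ua ub xa xb ha hb le0 leu; elim=> [//|t IH].
apply: (coercive_Zmx_le_inv e_diff eps_gt0 E_coercive E_Zmx).
by rewrite ha hb; exact: f_homo.
Qed.

Lemma model_contracting : contracting_sys e f alpha.
Proof.
split; first exact: model_well_posed.
exists (+oo)%E; split; first exact: leey.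
exists (fun xa xb => l1norm (e xa - e xb) / eps + 1); split; [|split].
- have -> : (fun z : 'rV[R]_n * 'rV[R]_n => l1norm (e z.1 - e z.2) / eps + 1)
      = (@l1norm R n \o (fun z => e z.1 - e z.2)) \* cst eps^-1 + cst 1 by [].
  move=> z; apply: continuousD; last exact: cst_continuous.
  apply: continuousM; last exact: cst_continuous.
  apply: (@continuous_comp _ _ _ (fun z => e z.1 - e z.2) (@l1norm R n)).
    apply: continuousB.
    + apply: (@continuous_comp _ _ _ fst e); first exact: cvg_fst.
      exact: differentiable_continuous.
    + apply: (@continuous_comp _ _ _ snd e); first exact: cvg_snd.
      exact: differentiable_continuous.
  exact: continuous_l1norm.
- by move=> xa xb; rewrite ltr_wpDl // divr_ge0 ?l1norm_ge0 ?ltW.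
- move=> u xa xb ha hb t.
  apply: le_lt_trans (sup_norm_le_l1norm e_diff eps_gt0 E_coercive _ _) _.
  rewrite mulrDr mulr1 mulrA ltr_pwDr ?exprn_gt0 // ler_pM2r ?invr_gt0 //.
  exact: l1norm_traj_le.
Qed.

Lemma model_positive : e 0 = f 0 0 -> positive_sys e f.
Proof.
move=> e0 u x hx x0 u0 t.
exact: (model_monotone hx (fun _ => e0) x0 u0).
Qed.

End ImplicitModel.

Lemma posdef_coercive (R : realType) n (A : 'M[R]_n) (eps : R) :
  posdef_mx (A + A^T - eps%:M) -> forall v, eps / 2 * dotr v v <= dotr v (v *m A^T).
Proof.
move=> pd v; have [->|v0] := eqVneq v 0; first by rewrite !dotr0l mulr0.
have := pd v v0; rewrite -/(dotr (v *m _) v) mulmxBr mulmxDr mul_mx_scalar.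
by rewrite dotrBl dotrDl dotrZl dotr_mulmxl [dotr (v *m A^T) v]dotrC; lra.
Qed.

Unset Implicit Arguments.
Set Strict Implicit.

Theorem theorem1 (R : realType) (n m : nat)
  (e : 'rV[R]_n -> 'rV[R]_n) (f : 'rV[R]_n -> 'rV[R]_m -> 'rV[R]_n)
  (alpha : R) :
  C1map e -> C1map (uncurry_f f) ->
  0 < alpha < 1 ->
  (exists eps : R, 0 < eps /\
     forall x, posdef_mx (Emat e x + (Emat e x)^T - eps%:M)) ->
  (forall x u, mx_le 0 (Fmat f x u)) ->
  (forall x u, mx_le 0 (Kmat f x u)) ->
  (forall x, is_Mmatrix (Emat e x)) ->
  (forall x u, mx_le 0 (const_mx 1 *m (alpha *: Emat e x - Fmat f x u)
                       : 'rV[R]_n)) ->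
  (well_posed_sys e f /\ monotone_sys e f /\ contracting_sys e f alpha) /\
  (e 0 = f 0 0 -> positive_sys e f).
Proof.
move=> [e_diff _] [f_diff _] /andP[alpha_gt0 _] [eps [eps_gt0 E_posdef]].
move=> F_ge0 K_ge0 E_Mmx colsum_ge0.
have eps2_gt0 : 0 < eps / 2 by rewrite divr_gt0.
have E_coercive x := posdef_coercive (E_posdef x).
have E_Zmx x := (E_Mmx x).1.
have fx_diff := differentiable_partial1 f_diff.
have fu_diff := differentiable_partial2 f_diff.
split; first split.
- exact: model_well_posed e_diff eps2_gt0 E_coercive.
- split.
    exact: model_monotone e_diff fx_diff fu_diff eps2_gt0 E_coercive E_Zmx F_ge0 K_ge0.
  exact: model_contracting e_diff fx_diff eps2_gt0 alpha_gt0 E_coercive E_Zmx F_ge0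
    colsum_ge0.
- exact: model_positive e_diff fx_diff fu_diff eps2_gt0 E_coercive E_Zmx F_ge0 K_ge0.
Qed.
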